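(* Let $n\ge1$, $N\ge1$, $p\in(0,1)$, and let $I:\{0,1\}^n\to\{0,1\}$ be a decoding-error indicator with error-correcting capability $t$ ($0\le t<n$, $I(\mathbf z)=0$ whenever $wt(\mathbf z)\le t$). For $q\in(0,1)$ let $\hat P_{IS}(e)=\frac1N\sum_{j=1}^N I(\mathbf z_j)W(wt(\mathbf z_j);p,q)$ with $\mathbf z_j$ i.i.d. with pmf $q^{wt(\mathbf z)}(1-q)^{n-wt(\mathbf z)}$. Then the function $q\mapsto\mathrm{var}_q[\hat P_{IS}(e)]$ is convex on $(0,1)$.
   Context: Setting: linear block code of length $n$ over a binary symmetric channel with cross-over probability $p$; all-zero codeword transmitted so the channel output is the error pattern $\mathbf z\in\{0,1\}^n$. $wt(\mathbf z)$ is the number of ones. $I(\mathbf z)=1$ iff $\mathbf z$ is erroneously decoded. $W(i;p,q)=\frac{p^i(1-p)^{n-i}}{q^i(1-q)^{n-i}}$. $\mathrm{var}_q$ is the variance when samples have pmf $q^{wt(\mathbf z)}(1-q)^{n-wt(\mathbf z)}$. *)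

From mathcomp Require Import all_boot all_order all_algebra.
Set Implicit Arguments. Unset Strict Implicit. Unset Printing Implicit Defensive.
Import Order.TTheory GRing.Theory Num.Theory.
Local Open Scope ring_scope.

Notation word n := {ffun 'I_n -> bool}.

Definition wt (n : nat) (z : word n) : nat := #|[pred i | z i]|.

Section Defs.
Variable R : realFieldType.

Definition W (n i : nat) (p q : R) : R :=
  p ^+ i * (1 - p) ^+ (n - i) / (q ^+ i * (1 - q) ^+ (n - i)).

Definition pmf_word (n : nat) (q : R) (z : word n) : R :=
  q ^+ wt z * (1 - q) ^+ (n - wt z).

Definition pmf_sample (n N : nat) (q : R) (zs : {ffun 'I_N -> word n}) : R :=
  \prod_(j < N) pmf_word q (zs j).

Definition P_IS (n N : nat) (I : word n -> bool) (p q : R)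
    (zs : {ffun 'I_N -> word n}) : R :=
  N%:R^-1 * \sum_(j < N) (I (zs j))%:R * W n (wt (zs j)) p q.

Definition expect (T : finType) (pmf : T -> R) (X : T -> R) : R :=
  \sum_(x : T) pmf x * X x.
Definition variance (T : finType) (pmf : T -> R) (X : T -> R) : R :=
  expect pmf (fun x => (X x - expect pmf X) ^+ 2).

Definition var_IS (n N : nat) (I : word n -> bool) (p q : R) : R :=
  variance (@pmf_sample n N q) (P_IS I p q).

End Defs.

(** The variance of the mean of N i.i.d. samples is 1/N times the variance
    of one sample, and for the importance-sampling weight this single-sample
    variance is  sum_z I(z) (p^wt z (1-p)^(n - wt z))^2 / (q^wt z (1-q)^(n - wt z))
    minus the square of the (q-independent) mean.  Each function
    q |-> 1 / (q^a (1-q)^b) is convex on (0,1): it lies above its tangent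
    lines, which is the weighted AM-GM inequality.  A nonnegative combination
    of convex functions minus a constant is convex. *)

From mathcomp Require Import all_boot all_order all_algebra.
From mathcomp Require Import ring lra.
Import Order.TTheory GRing.Theory Num.Theory.
Local Open Scope ring_scope.
Set Implicit Arguments. Unset Strict Implicit.

Section ConvexOn01.
Variable R : realFieldType.

Definition convex_on01 (g : R -> R) : Prop :=
  forall q1 q2 lam, 0 < q1 < 1 -> 0 < q2 < 1 -> 0 <= lam <= 1 ->
    g (lam * q1 + (1 - lam) * q2) <= lam * g q1 + (1 - lam) * g q2.

Lemma convex_comb_in01 (q1 q2 lam : R) :
  0 < q1 < 1 -> 0 < q2 < 1 -> 0 <= lam <= 1 -> 0 < lam * q1 + (1 - lam) * q2 < 1.
Proof.
move=> /andP[q1_gt0 q1_lt1] /andP[q2_gt0 q2_lt1] /andP[lam_ge0 lam_le1].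
(* compare with [q1 * q2] from below and with [1 - (1 - q1) * (1 - q2)] from above *)
have low1 : 0 <= lam * (q1 - q1 * q2) by apply: mulr_ge0; nra.
have low2 : 0 <= (1 - lam) * (q2 - q1 * q2) by apply: mulr_ge0; nra.
have up1 : 0 <= lam * ((1 - q1) - (1 - q1) * (1 - q2)) by apply: mulr_ge0; nra.
have up2 : 0 <= (1 - lam) * ((1 - q2) - (1 - q1) * (1 - q2)) by apply: mulr_ge0; nra.
have : 0 < q1 * q2 by rewrite mulr_gt0.
have : 0 < (1 - q1) * (1 - q2) by rewrite mulr_gt0 // subr_gt0.
by move=> *; apply/andP; split; nra.
Qed.

Lemma eq_convex_on01 (f g : R -> R) :
  (forall q, 0 < q < 1 -> f q = g q) -> convex_on01 g -> convex_on01 f.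
Proof.
move=> fg conv_g q1 q2 lam h1 h2 hlam.
by rewrite !fg ?conv_g ?convex_comb_in01.
Qed.

Lemma convex_on01_sum (I : finType) (c : I -> R) (g : I -> R -> R) :
  (forall i, 0 <= c i) -> (forall i, convex_on01 (g i)) ->
  convex_on01 (fun q => \sum_i c i * g i q).
Proof.
move=> c_ge0 conv_g q1 q2 lam h1 h2 hlam.
rewrite !mulr_sumr -big_split /=; apply: ler_sum => i _.
apply: le_trans (ler_wpM2l (c_ge0 i) (conv_g i _ _ _ h1 h2 hlam)) _.
by rewrite le_eqVlt; apply/orP; left; apply/eqP; ring.
Qed.

Lemma convex_on01_affine (k m : R) (g : R -> R) :
  0 <= k -> convex_on01 g -> convex_on01 (fun q => k * (g q - m)).
Proof.
move=> k_ge0 conv_g q1 q2 lam h1 h2 hlam.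
have -> : lam * (k * (g q1 - m)) + (1 - lam) * (k * (g q2 - m))
          = k * (lam * g q1 + (1 - lam) * g q2 - m) by ring.
by rewrite ler_wpM2l // lerB // conv_g.
Qed.

End ConvexOn01.

Section BernoulliWeight.
Variable R : realFieldType.

(* AM-GM for [a] copies of [r], [b] copies of [s] and the last factor, whose
   arithmetic mean is 1. *)
Lemma AGM_tangent (a b : nat) (r s : R) : 0 <= r -> 0 <= s ->
  r ^+ a * s ^+ b * (1 + a%:R * (1 - r) + b%:R * (1 - s)) <= 1.
Proof.
move=> r_ge0 s_ge0; set K := (1 + _ + _).
have [K_le0|K_gt0] := lerP K 0.
  apply: le_trans (_ : 0 <= 1) => //.
  by rewrite mulr_ge0_le0 // mulr_ge0 // exprn_ge0.
pose E (i : ('I_a + 'I_b) + 'I_1) : R :=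
  match i with inl (inl _) => r | inl (inr _) => s | inr _ => K end.
have cardE : #|predT : {pred ('I_a + 'I_b) + 'I_1}| = (a + b).+1.
  by rewrite cardT -cardE !card_sum !card_ord addn1.
have sumE : \sum_(i in predT) E i = (a + b).+1%:R.
  rewrite big_sumType /= big_ord1 big_sumType /= !sumr_const !card_ord /K.
  rewrite -[r *+ a]mulr_natr -[s *+ b]mulr_natr -[(a + b).+1]addn1 !natrD; ring.
have prodE : \prod_(i in predT) E i = r ^+ a * s ^+ b * K.
  by rewrite big_sumType /= big_ord1 big_sumType /= !prodr_const !card_ord.
have := leif_AGM (A := predT) (E := E); rewrite cardE sumE prodE.
move=> AGM; have := (AGM _).1; rewrite divff ?pnatr_eq0 // expr1n; apply=> i _.
by case: i => [[i|i]|i] /=; [exact: r_ge0 | exact: s_ge0 | exact: ltW].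
Qed.

Definition bern_weight (a b : nat) (y : R) : R := y ^+ a * (1 - y) ^+ b.

Lemma bern_weight_gt0 (a b : nat) (y : R) : 0 < y < 1 -> 0 < bern_weight a b y.
Proof. by move=> /andP[y_gt0 y_lt1]; rewrite mulr_gt0 // exprn_gt0 // subr_gt0. Qed.

(* The left side is the tangent of [h := (bern_weight a b)^-1] at [x],
   evaluated at [y], since [h'(x) = h(x) (b / (1 - x) - a / x)]. *)
Lemma inv_bern_weight_tangent (a b : nat) (x y : R) : 0 < x < 1 -> 0 < y < 1 ->
  (bern_weight a b x)^-1 * (1 + a%:R * ((x - y) / x) + b%:R * ((y - x) / (1 - x)))
    <= (bern_weight a b y)^-1.
Proof.
move=> hx hy; have wx_gt0 := bern_weight_gt0 a b hx.
case/andP: hx => x_gt0 x_lt1; case/andP: hy => y_gt0 y_lt1.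
have x_neq0 : x != 0 by rewrite gt_eqF.
have x1_neq0 : 1 - x != 0 by rewrite gt_eqF // subr_gt0.
set r := y / x; set s := (1 - y) / (1 - x).
have r_gt0 : 0 < r by rewrite divr_gt0.
have s_gt0 : 0 < s by rewrite divr_gt0 // subr_gt0.
have rs_gt0 : 0 < r ^+ a * s ^+ b by rewrite mulr_gt0 // exprn_gt0.
have -> : (bern_weight a b y)^-1 = (bern_weight a b x)^-1 * (r ^+ a * s ^+ b)^-1.
  have y_eq : y = x * r by rewrite /r; field.
  have y1_eq : 1 - y = (1 - x) * s by rewrite /s; field.
  by rewrite -invfM /bern_weight y1_eq {1}y_eq !exprMn; congr (_^-1); ring.
have -> : (x - y) / x = 1 - r by rewrite /r; field.
have -> : (y - x) / (1 - x) = 1 - s by rewrite /s; field.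
rewrite ler_pM2l ?invr_gt0 // -(ler_pM2l rs_gt0) mulfV ?gt_eqF //.
by apply: AGM_tangent; apply: ltW.
Qed.

Lemma convex_inv_bern_weight (a b : nat) :
  convex_on01 (fun y => (bern_weight a b y)^-1).
Proof.
move=> q1 q2 lam h1 h2 hlam; have hq := convex_comb_in01 h1 h2 hlam.
case/andP: hlam => lam_ge0 lam_le1.
set q := lam * q1 + (1 - lam) * q2 in hq *.
have t1 := inv_bern_weight_tangent a b hq h1.
have t2 := inv_bern_weight_tangent a b hq h2.
have wq_neq0 := lt0r_neq0 (bern_weight_gt0 a b hq).
case/andP: hq => q_gt0 q_lt1.
have q_neq0 : q != 0 by rewrite gt_eqF.
have q1_neq0 : 1 - q != 0 by rewrite gt_eqF // subr_gt0.
apply: le_trans (lerD (ler_wpM2l lam_ge0 t1) (ler_wpM2l _ t2));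
  last by rewrite subr_ge0.
(* the first-order terms cancel because [q] is the [lam]-barycentre *)
rewrite le_eqVlt; apply/orP; left; apply/eqP.
move: q_neq0 q1_neq0 wq_neq0; rewrite /q => q_neq0 q1_neq0 wq_neq0.
by field; rewrite q_neq0 q1_neq0 wq_neq0.
Qed.

End BernoulliWeight.

Section Expectation.
Variables (R : realFieldType) (T : finType) (pmf : T -> R).

Lemma eq_expect (X Y : T -> R) : X =1 Y -> expect pmf X = expect pmf Y.
Proof. by move=> XY; apply: eq_bigr => x _; rewrite XY. Qed.

Lemma expectZ (c : R) (X : T -> R) :
  expect pmf (fun x => c * X x) = c * expect pmf X.
Proof. by rewrite /expect mulr_sumr; apply: eq_bigr => x _; rewrite mulrCA. Qed.

Lemma expect_sum (I : finType) (X : I -> T -> R) :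
  expect pmf (fun x => \sum_i X i x) = \sum_i expect pmf (X i).
Proof.
rewrite /expect exchange_big /=; apply: eq_bigr => x _.
by rewrite mulr_sumr.
Qed.

Lemma varianceE (X : T -> R) : \sum_x pmf x = 1 ->
  variance pmf X = expect pmf (fun x => X x ^+ 2) - expect pmf X ^+ 2.
Proof.
move=> pmf_sum1; rewrite /variance /expect; set m := \sum_x pmf x * X x.
have -> : \sum_x pmf x * (X x - m) ^+ 2 =
          \sum_x (pmf x * X x ^+ 2 - (2 * m) * (pmf x * X x) + m ^+ 2 * pmf x).
  by apply: eq_bigr => x _; ring.
rewrite big_split sumrB /= -!mulr_sumr pmf_sum1 -/m; ring.
Qed.

End Expectation.

Section IIDSample.
Variables (R : realFieldType) (T : finType) (f : T -> R) (N : nat).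
Hypothesis f_sum1 : \sum_x f x = 1.

Definition pmf_iid (zs : {ffun 'I_N -> T}) : R := \prod_(j < N) f (zs j).

Lemma expect_iid_prod (F : 'I_N -> T -> R) :
  expect pmf_iid (fun zs => \prod_j F j (zs j)) = \prod_j expect f (F j).
Proof.
rewrite /expect bigA_distr_bigA; apply: eq_bigr => zs _.
by rewrite /pmf_iid -big_split.
Qed.

Lemma expect_iid_prod_in (S : {pred 'I_N}) (F : 'I_N -> T -> R) :
  expect pmf_iid (fun zs => \prod_(j in S) F j (zs j)) = \prod_(j in S) expect f (F j).
Proof.
pose G j := if j \in S then F j else fun _ => 1.
have expect1 : expect f (fun _ => 1) = 1.
  by rewrite /expect (eq_bigr f) // => x _; exact: mulr1.
transitivity (expect pmf_iid (fun zs => \prod_j G j (zs j))).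
  apply: eq_expect => zs; rewrite [LHS]big_mkcond.
  by apply: eq_bigr => j _; rewrite /G; case: (j \in S).
rewrite expect_iid_prod [RHS]big_mkcond.
by apply: eq_bigr => j _; rewrite /G; case: (j \in S).
Qed.

Lemma expect_iid_coord (Y : T -> R) (k : 'I_N) :
  expect pmf_iid (fun zs => Y (zs k)) = expect f Y.
Proof.
have := expect_iid_prod_in (pred1 k) (fun _ => Y).
by rewrite big_pred1_eq => <-; apply: eq_expect => zs; rewrite big_pred1_eq.
Qed.

Lemma expect_iid_coord2 (Y Z : T -> R) (j k : 'I_N) : j != k ->
  expect pmf_iid (fun zs => Y (zs j) * Z (zs k)) = expect f Y * expect f Z.
Proof.
move=> jk; pose F i := if i == j then Y else Z.
have prod2 (G : 'I_N -> R) : \prod_(i in pred2 j k) G i = G j * G k.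
  rewrite (bigD1 j) ?inE ?eqxx //=; congr (_ * _); apply: big_pred1 => i /=.
  by rewrite !inE; case: eqP => [->|_] /=; rewrite ?andbT ?(negbTE jk).
have := expect_iid_prod_in (pred2 j k) F.
rewrite prod2 /F eqxx eq_sym (negbTE jk) => <-.
by apply: eq_expect => zs; rewrite prod2 /F eqxx eq_sym (negbTE jk).
Qed.

Lemma sum_pmf_iid : \sum_zs pmf_iid zs = 1.
Proof.
transitivity (\prod_(j < N) \sum_x f x); first by rewrite bigA_distr_bigA.
by rewrite big1.
Qed.

Lemma variance_sample_mean (Y : T -> R) : (0 < N)%N ->
  variance pmf_iid (fun zs => N%:R^-1 * \sum_(j < N) Y (zs j))
  = N%:R^-1 * variance f Y.
Proof.
move=> N_gt0; have N_neq0 : N%:R != 0 :> R by rewrite pnatr_eq0 -lt0n.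
rewrite !varianceE ?sum_pmf_iid //.
set mu := expect f Y; set nu := expect f (fun z => Y z ^+ 2).
have mean : expect pmf_iid (fun zs => N%:R^-1 * \sum_j Y (zs j)) = mu.
  rewrite expectZ expect_sum (eq_bigr (fun _ => mu)) => [|j _]; last first.
    exact: expect_iid_coord.
  by rewrite sumr_const card_ord -[mu *+ N]mulr_natl mulrA mulVf ?mul1r.
have pair j k : expect pmf_iid (fun zs => Y (zs j) * Y (zs k))
                = mu ^+ 2 + (if k == j then nu - mu ^+ 2 else 0).
  case: eqP => [->|/eqP kj]; last by rewrite addr0 expect_iid_coord2 ?expr2 // eq_sym.
  rewrite addrC subrK /nu -(expect_iid_coord _ j).
  by apply: eq_expect => zs; rewrite expr2.
have square : expect pmf_iid (fun zs => (N%:R^-1 * \sum_j Y (zs j)) ^+ 2)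
              = N%:R^-1 ^+ 2 * (N%:R * (mu ^+ 2 *+ N + (nu - mu ^+ 2))).
  rewrite (eq_expect _ (Y := fun zs : {ffun 'I_N -> T} =>
             N%:R^-1 ^+ 2 * \sum_j \sum_k Y (zs j) * Y (zs k))); last first.
    move=> zs; rewrite exprMn; congr (_ * _); rewrite expr2 mulr_suml.
    by apply: eq_bigr => j _; rewrite mulr_sumr.
  rewrite expectZ expect_sum; congr (_ * _).
  rewrite (eq_bigr (fun _ => mu ^+ 2 *+ N + (nu - mu ^+ 2))) => [|j _].
    by rewrite sumr_const card_ord mulr_natl.
  rewrite expect_sum (eq_bigr _ (fun k _ => pair j k)) big_split /= sumr_const card_ord.
  by rewrite -big_mkcond /= big_pred1_eq.
by rewrite mean square -mulr_natr; field.
Qed.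

End IIDSample.

Section ImportanceSampling.
Variables (R : realFieldType) (n : nat).

Lemma pmf_wordE (q : R) (z : word n) :
  pmf_word q z = \prod_(i < n) (if z i then q else 1 - q).
Proof.
rewrite (bigID (fun i => z i)) /=.
rewrite (eq_bigr (fun _ => q)) => [|i ->//].
rewrite [X in _ * X](eq_bigr (fun _ => 1 - q)) => [|i /negbTE ->//].
rewrite !prodr_const; congr (_ * _ ^+ _).
have := cardC [pred i | z i]; rewrite card_ord => card_n.
by rewrite -[X in (X - _)%N]card_n /wt addKn; apply: eq_card.
Qed.

Lemma sum_pmf_word (q : R) : \sum_(z : word n) pmf_word q z = 1.
Proof.
transitivity (\prod_(i < n) \sum_(b : bool) if b then q else 1 - q).
  by rewrite bigA_distr_bigA; apply: eq_bigr => z _; rewrite pmf_wordE.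
by rewrite big1 // => i _; rewrite big_bool /= addrC subrK.
Qed.

Lemma var_IS_inv_bern_weight (N : nat) (I : word n -> bool) (p q : R) :
  (0 < N)%N -> 0 < q < 1 ->
  var_IS N I p q = N%:R^-1 *
    (\sum_z (I z)%:R * bern_weight (wt z) (n - wt z) p ^+ 2
              * (bern_weight (wt z) (n - wt z) q)^-1
     - (\sum_z (I z)%:R * bern_weight (wt z) (n - wt z) p) ^+ 2).
Proof.
move=> N_gt0 hq.
rewrite /var_IS (_ : variance _ _ = N%:R^-1 *
  variance (pmf_word q) (fun z => (I z)%:R * W n (wt z) p q)); last first.
  exact: (variance_sample_mean (sum_pmf_word q)).
rewrite varianceE ?sum_pmf_word //; congr (_ * (_ - _ ^+ 2)).
all: apply: eq_bigr => z _.
all: have := lt0r_neq0 (bern_weight_gt0 (wt z) (n - wt z) hq).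
all: rewrite /pmf_word /W -/(bern_weight (wt z) (n - wt z) p) -/(bern_weight _ _ q).
all: by case: (I z) => /= w_neq0; [field | rewrite !mul0r ?expr2 ?mul0r ?mulr0].
Qed.

End ImportanceSampling.

Theorem lemma3 (R : realFieldType) (n N t : nat) (p : R) (I : word n -> bool) :
  (0 < n)%N -> (0 < N)%N -> 0 < p < 1 -> (t < n)%N ->
  (forall z : word n, (wt z <= t)%N -> I z = false) ->
  forall q1 q2 lam : R, 0 < q1 < 1 -> 0 < q2 < 1 -> 0 <= lam <= 1 ->
    var_IS N I p (lam * q1 + (1 - lam) * q2)
      <= lam * var_IS N I p q1 + (1 - lam) * var_IS N I p q2.
Proof.
(* convexity holds for every decoder *)
move=> _ N_gt0 _ _ _.
pose w (y : R) (z : word n) := bern_weight (wt z) (n - wt z) y.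
suff : convex_on01 (var_IS N I p) by [].
apply: (@eq_convex_on01 _ _ (fun q => N%:R^-1 *
   (\sum_z (I z)%:R * w p z ^+ 2 * (w q z)^-1 - (\sum_z (I z)%:R * w p z) ^+ 2)))
  => [q hq|]; first exact: var_IS_inv_bern_weight.
apply: convex_on01_affine; first by rewrite invr_ge0 ler0n.
apply: (convex_on01_sum (g := fun z y => (w y z)^-1)) => z.
  by rewrite mulr_ge0 ?ler0n ?sqr_ge0.
exact: convex_inv_bern_weight.
Qed.
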